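(* Let $\mathbb{V}_0$ be a finite set of nodes with an optimal TSP route $\sigma_0$, and let $Z_1,\dots,Z_k$ be additional distinct nodes not in $\mathbb{V}_0$, with $\omega$ a symmetric weight function on pairs of distinct nodes of $\mathbb{V}_0\cup\{Z_1,\dots,Z_k\}$. For $i=1,\dots,k$ let $\mathbb{V}_i=\mathbb{V}_{i-1}\cup\{Z_i\}$, let $P_i,Q_i$ be neighbours on $\sigma_{i-1}$, and let $\sigma_i$ be obtained from $\sigma_{i-1}$ by inserting $Z_i$ between $P_i$ and $Q_i$. Suppose that for every $i$ there is no unordered pair $\{A,B\}$ of distinct nodes of $\mathbb{V}_{i-1}$ (which includes the previously added nodes $Z_1,\dots,Z_{i-1}$) with $\{A,B\}\neq\{P_i,Q_i\}$ such that $\omega(A,Z_i)+\omega(B,Z_i)-\omega(A,B)\le\omega(P_i,Z_i)+\omega(Q_i,Z_i)-\omega(P_i,Q_i)$. Then $\sigma_k$ is an optimal TSP route over $\mathbb{V}_k=\mathbb{V}_0\cup\{Z_1,\dots,Z_k\}$.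
   Context: For a set of nodes with weights $\omega$, a route is a cyclic ordering (permutation) $\sigma=(\sigma_1,\dots,\sigma_n)$ of all nodes, with cost $c(\sigma)=\omega(\sigma_n,\sigma_1)+\sum_{i=1}^{n-1}\omega(\sigma_i,\sigma_{i+1})$; a route is optimal if it minimizes this cost. Two nodes are neighbours on $\sigma$ if they are consecutive in $\sigma$ or are its first and last element. *)

From mathcomp Require Import all_boot all_order all_algebra.
Set Implicit Arguments. Unset Strict Implicit. Unset Printing Implicit Defensive.
Import Order.TTheory GRing.Theory Num.Theory.
Local Open Scope ring_scope.

Section TSP.
Variables (T : eqType) (R : realDomainType) (w : T -> T -> R).

(* c(sigma) = w(sigma_n, sigma_1) + sum_{i<n} w(sigma_i, sigma_{i+1}):
   sum over the cyclically consecutive pairs (sigma_1,sigma_2), ...,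
   (sigma_{n-1},sigma_n), (sigma_n,sigma_1). *)
Definition cost (s : seq T) : R :=
  match s with
  | [::] => 0
  | x :: s' => \sum_(p <- zip (x :: s') (rcons s' x)) w p.1 p.2
  end.

(* sigma is a route over the node set V (a duplicate-free list of nodes):
   a permutation of all nodes of V. *)
Definition route (V s : seq T) : Prop := perm_eq s V.

Definition optimal (V s : seq T) : Prop :=
  route V s /\ forall t, route V t -> cost s <= cost t.

(* A and B are neighbours on sigma: consecutive (0-based positions j, j+1)
   or the last and first element. *)
Definition neighbours (s : seq T) (A B : T) : Prop :=
  exists2 j, (j < size s)%N &
    let x := nth A s j in let y := nth A s (j.+1 %% size s) in
    (x = A /\ y = B) \/ (x = B /\ y = A).

(* s' is obtained from s by inserting Z between the neighbours P and Q:
   for a position j with {s_j, s_{j+1 mod n}} = {P, Q}, Z is put right after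
   position j (so between s_j and its cyclic successor). *)
Definition insert_between (s : seq T) (P Q Z : T) (s' : seq T) : Prop :=
  exists2 j, (j < size s)%N &
    let x := nth P s j in let y := nth P s (j.+1 %% size s) in
    ((x = P /\ y = Q) \/ (x = Q /\ y = P)) /\
    s' = take j.+1 s ++ Z :: drop j.+1 s.

End TSP.

From mathcomp Require Import all_boot all_order all_algebra.
From mathcomp Require Import ring.
Set Implicit Arguments. Unset Strict Implicit. Unset Printing Implicit Defensive.
Import Order.TTheory GRing.Theory Num.Theory.
Local Open Scope ring_scope.

(* Inserting z between the cyclic neighbours x, y of a route raises its cost
   by the detour w x z + w z y - w x y.  Conversely, rotating any route over
   V ++ [z] so that z comes first and deleting z leaves a route over V that is
   cheaper by the detour of the two neighbours of z.  So if s is optimal over V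
   and z is inserted at a cheapest pair of s, the result is optimal over
   V ++ [z], even for asymmetric weights; symmetry is only needed to match the
   unordered detours of the hypothesis. *)

Section Tours.
Variables (T : eqType) (R : realDomainType) (w : T -> T -> R).

Fixpoint path_cost (x : T) (s : seq T) : R :=
  if s is y :: s' then w x y + path_cost y s' else 0.

Lemma path_cost_zip x s z :
  \sum_(p <- zip (x :: s) (rcons s z)) w p.1 p.2 = path_cost x s + w (last x s) z.
Proof.
elim: s x => [|y s IHs] x /=; first by rewrite big_seq1 add0r.
by rewrite big_cons IHs addrA.
Qed.

Lemma cost_cons x s : cost w (x :: s) = path_cost x s + w (last x s) x.
Proof. exact: path_cost_zip. Qed.

Lemma path_cost_rcons x s z : path_cost x (rcons s z) = path_cost x s + w (last x s) z.
Proof.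
elim: s x => [|y s IHs] x /=; first by rewrite addr0 add0r.
by rewrite IHs addrA.
Qed.

Lemma cost_rot1 s : cost w (rot 1 s) = cost w s.
Proof.
case: s => [|x [|y s]] //; rewrite rot1_cons rcons_cons !cost_cons /=.
by rewrite path_cost_rcons last_rcons addrC addrA.
Qed.

Lemma cost_rot n s : cost w (rot n s) = cost w s.
Proof.
elim: n => [|n IHn]; first by rewrite rot0.
have [lt_ns|le_sn] := ltnP n (size s); first by rewrite rotS // cost_rot1.
by rewrite rot_oversize // leqW.
Qed.

Definition detour (x y z : T) : R := w x z + w z y - w x y.

Lemma cost_cons_insert z b u :
  cost w (z :: b :: u) = cost w (b :: u) + detour (last b u) b z.
Proof. by rewrite !cost_cons /detour /=; ring. Qed.

Lemma cost_insert_cat a p z q :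
  cost w (a :: p ++ z :: q) = cost w (a :: p ++ q) + detour (last a p) (head a q) z.
Proof.
rewrite -(cost_rot (size (a :: p)) (a :: p ++ z :: q)).
rewrite -(cost_rot (size (a :: p)) (a :: p ++ q)) -!cat_cons !rot_size_cat.
by case: q => [|b q]; rewrite cost_cons_insert // last_cat.
Qed.

Lemma mem_last_head_cat (a : T) (p q : seq T) :
  last a p \in a :: p ++ q /\ head a q \in a :: p ++ q.
Proof.
split; first by rewrite -cat_cons mem_cat mem_last.
by case: q => [|b q]; rewrite /= ?mem_head // !(in_cons, mem_cat) eqxx !orbT.
Qed.

Lemma insert_betweenP (s : seq T) P Q z s' : insert_between s P Q z s' ->
  exists a p q, [/\ s = a :: p ++ q, s' = a :: p ++ z :: q &
    (last a p = P /\ head a q = Q) \/ (last a p = Q /\ head a q = P)].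
Proof.
case=> j lt_js /= [PQ ->].
have := size_takel lt_js.
case def_p : (take j.+1 s) => [//|a p] [size_p].
exists a, p, (drop j.+1 s); split=> //; first by rewrite -cat_cons -def_p cat_take_drop.
have -> : last a p = nth P s j.
  rewrite -(nth_take P (ltnSn j)) def_p -[last a p]/(last P (a :: p)).
  by rewrite -nth_last /= size_p.
suff -> : head a (drop j.+1 s) = nth P s (j.+1 %% size s) by [].
have [lt_j1s|le_sj1] := ltnP j.+1 (size s).
  by rewrite modn_small // -nth0 nth_drop addn0 (set_nth_default P).
have eq_j1s : j.+1 = size s by apply/eqP; rewrite eqn_leq le_sj1 lt_js.
by rewrite -eq_j1s modnn drop_oversize ?eq_j1s //= -(nth_take P (ltn0Sn j)) def_p.
Qed.

Lemma optimal_cheapest_insertion V a p z q :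
  uniq V -> optimal w V (a :: p ++ q) ->
  (forall A B, A \in V -> B \in V -> A != B ->
     detour (last a p) (head a q) z <= detour A B z) ->
  optimal w (rcons V z) (a :: p ++ z :: q).
Proof.
move=> uniqV [route_s opt_s] cheapest; split.
  rewrite /route perm_sym perm_rcons perm_sym.
  by rewrite -cat_cons (perm_catCA (a :: p) [:: z] q) perm_cons.
move=> t route_t.
have [i u rot_t] : rot_to_spec t z.
  by apply: rot_to; rewrite (perm_mem route_t) mem_rcons mem_head.
have route_u : perm_eq u V.
  by rewrite -(perm_cons z) -rot_t perm_rot perm_sym -perm_rcons perm_sym.
case: u rot_t route_u => [|b u] rot_t route_u.
  by move: (perm_size route_s); rewrite -(perm_size route_u).
rewrite -(cost_rot i t) rot_t cost_cons_insert cost_insert_cat lerD ?opt_s //.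
have memV := perm_mem route_u.
have [eq_bu|neq_bu] := eqVneq (last b u) b; last first.
  by apply: cheapest => //; rewrite -memV ?mem_last ?mem_head.
(* The neighbours of z in t coincide only if V, hence s, is a singleton. *)
have u0 : u = [::].
  move: (perm_uniq route_u); rewrite uniqV.
  by case: u eq_bu {rot_t route_u memV} => [//|c u] /= <-; rewrite mem_last.
move: (mem_last_head_cat a p q); rewrite !(perm_mem route_s) -!memV u0 !mem_seq1.
by case=> /eqP-> /eqP->.
Qed.

Lemma cheapest_of_unique_cheapest V z P Q x y :
  {in z :: V &, forall a b, w a b = w b a} -> x \in V -> y \in V ->
  (x = P /\ y = Q) \/ (x = Q /\ y = P) ->
  (forall A B, A \in V -> B \in V -> A != B ->
     ~ ((A = P /\ B = Q) \/ (A = Q /\ B = P)) ->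
     ~ (w A z + w B z - w A B <= w P z + w Q z - w P Q)) ->
  forall A B, A \in V -> B \in V -> A != B -> detour x y z <= detour A B z.
Proof.
move=> symV x_in y_in xy unique A B A_in B_in neq_AB.
pose sym_detour C D := w C z + w D z - w C D.
have detourE C D : D \in V -> detour C D z = sym_detour C D.
  by move=> D_in; rewrite /detour (symV z D) ?mem_head // in_cons D_in orbT.
have sym_detourC C D : C \in V -> D \in V -> sym_detour C D = sym_detour D C.
  move=> C_in D_in; rewrite /sym_detour [w C z + _]addrC (symV C D) //.
    by rewrite in_cons C_in orbT.
  by rewrite in_cons D_in orbT.
rewrite !detourE //.
have -> : sym_detour x y = sym_detour P Q.
  by case: xy => -[ex ey]; subst x y; rewrite // sym_detourC.
have [/orP AB | not_AB] := boolP (((A == P) && (B == Q)) || ((A == Q) && (B == P))).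
  by case: AB => /andP[/eqP eA /eqP eB]; subst A B; rewrite // sym_detourC.
apply/ltW; rewrite ltNge; apply/negP/unique => // -[] [eA eB].
  by move: not_AB; rewrite eA eB !eqxx.
by move: not_AB; rewrite eA eB !eqxx orbT.
Qed.
End Tours.

Theorem corollary1 (T : eqType) (R : realDomainType) (w : T -> T -> R)
    (V0 : seq T) (k : nat) (Z P Q : nat -> T) (sigma : nat -> seq T) :
  let V := fun i : nat => V0 ++ map Z (iota 1 i) in
  uniq (V k) ->
  (forall x y, x \in V k -> y \in V k -> x != y -> w x y = w y x) ->
  optimal w V0 (sigma 0%N) ->
  (forall i, (1 <= i <= k)%N -> neighbours (sigma i.-1) (P i) (Q i)) ->
  (forall i, (1 <= i <= k)%N ->
     insert_between (sigma i.-1) (P i) (Q i) (Z i) (sigma i)) ->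
  (forall i, (1 <= i <= k)%N ->
     forall A B, A \in V i.-1 -> B \in V i.-1 -> A != B ->
       ~ ((A = P i /\ B = Q i) \/ (A = Q i /\ B = P i)) ->
       ~ (w A (Z i) + w B (Z i) - w A B <=
          w (P i) (Z i) + w (Q i) (Z i) - w (P i) (Q i))) ->
  optimal w (V k) (sigma k).
Proof.
(* The neighbours hypothesis is implied by insert_between. *)
move=> V uniq_Vk sym_w opt0 _ insert_step unique_cheapest.
have V_succ i : V i.+1 = rcons (V i) (Z i.+1).
  by rewrite /V -[i.+1]addn1 iotaD map_cat catA -cats1 add1n addn1.
have sub_Vk i : (i <= k)%N -> subseq (V i) (V k).
  move=> le_ik; rewrite /V subseq_cat2l map_subseq //.
  by rewrite -(subnKC le_ik) iotaD prefix_subseq.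
have sym_Vk : {in V k &, forall a b, w a b = w b a}.
  by move=> a b a_in b_in; case: (eqVneq a b) => [->|]; last exact: sym_w.
suff opt_i i : (i <= k)%N -> optimal w (V i) (sigma i) by exact: opt_i.
elim: i => [_|i IHi lt_ik]; first by rewrite /V cats0.
have [route_i _] := IHi (ltnW lt_ik).
have sym_i : {in Z i.+1 :: V i &, forall a b, w a b = w b a}.
  apply: sub_in2 sym_Vk => c c_in; apply: (mem_subseq (sub_Vk _ lt_ik)).
  by rewrite V_succ mem_rcons.
have /insert_betweenP[a [p [q [def_s -> xy]]]] := insert_step i.+1 lt_ik.
have [x_in y_in] : last a p \in V i /\ head a q \in V i.
  by rewrite -!(perm_mem route_i) /= def_s; apply: mem_last_head_cat.
rewrite V_succ; apply: optimal_cheapest_insertion.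
- by move: (subseq_uniq (sub_Vk _ lt_ik) uniq_Vk); rewrite V_succ rcons_uniq => /andP[].
- by rewrite -def_s; exact: IHi (ltnW lt_ik).
- exact: cheapest_of_unique_cheapest sym_i x_in y_in xy (unique_cheapest i.+1 lt_ik).
Qed.
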